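(* There is an absolute constant $c>0$ such that the following holds. Let $\mathbf T$ be a size-$s$ stochastic decision tree over $\{0,1\}^n$. For every $\varepsilon\in(0,1/2)$ there is a stochastic-leaf decision tree $\overline{\mathbf T}$ of size $S\le s^{c/\varepsilon^2}$ such that $\mathbb{E}_{\mathbf x}\big[|\mu_{\mathbf T}(\mathbf x)-\mu_{\overline{\mathbf T}}(\mathbf x)|\big]\le\varepsilon$, where $\mathbf x$ is uniform on $\{0,1\}^n$.
   Context: A stochastic decision tree (DT) $\mathbf{T}$ over $\{0,1\}^n$ is a rooted binary tree whose internal nodes are either deterministic nodes, each labeled by a variable $x_i$ ($i\in[n]$) with one outgoing edge followed when $x_i=0$ and one when $x_i=1$, or stochastic nodes, each with two outgoing edges followed with probabilities $p$ and $1-p$ (for a node-specific $p\in[0,1]$, using fresh independent randomness at each node), and whose leaves are labeled $0$ or $1$. On input $x$, $\mathbf{T}(x)$ is the (random) label of the leaf reached. The size of a DT is its number of leaves. A stochastic-leaf DT is a stochastic DT in which every stochastic node has only leaves as its children. The mean function of $\mathbf T$ is $\mu_{\mathbf T}(x)=\Pr[\mathbf T(x)=1]$. *)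

From HB Require Import structures.
From mathcomp Require Import all_boot all_order all_algebra.
From mathcomp Require Import all_classical all_reals.
From Stdlib Require Import Rdefinitions.
From mathcomp Require Import Rstruct exp.
Set Implicit Arguments. Unset Strict Implicit. Unset Printing Implicit Defensive.
Import Order.TTheory GRing.Theory Num.Theory.
Local Open Scope ring_scope.

Inductive sdt (n : nat) : Type :=
| Leaf of bool
| DNode of 'I_n & sdt n & sdt n         (* query x_i: first subtree if x_i = 0, second if x_i = 1 *)
| SNode of R & sdt n & sdt n.           (* stochastic: first subtree w.p. p, second w.p. 1-p *)

Arguments Leaf {n}.

Fixpoint sdt_valid n (T : sdt n) : bool :=
  match T with
  | Leaf _ => true
  | DNode _ T0 T1 => sdt_valid T0 && sdt_valid T1
  | SNode p T0 T1 => [&& 0 <= p, p <= 1, sdt_valid T0 & sdt_valid T1]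
  end.

Fixpoint sdt_size n (T : sdt n) : nat :=
  match T with
  | Leaf _ => 1
  | DNode _ T0 T1 => sdt_size T0 + sdt_size T1
  | SNode _ T0 T1 => sdt_size T0 + sdt_size T1
  end.

Definition is_leaf n (T : sdt n) : bool := if T is Leaf _ then true else false.

Fixpoint stochastic_leaf n (T : sdt n) : bool :=
  match T with
  | Leaf _ => true
  | DNode _ T0 T1 => stochastic_leaf T0 && stochastic_leaf T1
  | SNode _ T0 T1 => is_leaf T0 && is_leaf T1
  end.

(* mean function mu_T(x) = Pr[T(x) = 1], fresh independent randomness at each node *)
Fixpoint sdt_mean n (T : sdt n) (x : {ffun 'I_n -> bool}) : R :=
  match T with
  | Leaf b => (b : nat)%:R
  | DNode i T0 T1 => if x i then sdt_mean T1 x else sdt_mean T0 x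
  | SNode p T0 T1 => p * sdt_mean T0 x + (1 - p) * sdt_mean T1 x
  end.

Definition mean_dist n (T T' : sdt n) : R :=
  (2 ^+ n)^-1 * \sum_(x : {ffun 'I_n -> bool}) `|sdt_mean T x - sdt_mean T' x|.

(* Resolving every stochastic node of T writes T as a convex combination of
   deterministic trees ("realizations"), each of size at most s = size T,
   whose mean functions average to mu_T.  Each realization is {0,1}-valued,
   so its deviation from mu_T has weighted second moment at most 1.  A
   derandomized sampling argument (method of conditional expectations) then
   picks k realizations D_1, ..., D_k whose summed deviation
   S(x) = sum_j (D_j(x) - mu_T(x)) has square sum over all inputs at most
   k 2^n.  The "counting tree" runs D_1, ..., D_k one after the other, counts
   the ones, and ends in a stochastic leaf returning 1 with probability
   count/k; it is stochastic-leaf, has size at most 2 s^k, and its mean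
   differs from mu_T by |S(x)|/k.  With k = floor(eps^-2) + 1, an AM-GM
   estimate gives an average error at most eps, and 2 s^k <= s^(2/eps^2),
   so the theorem holds with c = 2. *)
(* Loaded before MathComp so that it does not shadow ssrnat's notations. *)
From Stdlib Require Import Rdefinitions.
From HB Require Import structures.
From mathcomp Require Import all_boot all_order all_algebra.
From mathcomp Require Import all_classical all_reals.
From mathcomp Require Import Rstruct exp.
From mathcomp Require Import ring lra.
Import Order.TTheory GRing.Theory Num.Theory.
Local Open Scope ring_scope.
Set Implicit Arguments. Unset Strict Implicit.

(* Facts about weighted sums over sequences of a type without decidable
   equality, where membership is replaced by an [all P] hypothesis. *)
Section WeightedSums.
Variable X : Type.
Implicit Types (P : pred X) (L : seq X).

Lemma all_allpairs (Y Z : Type) (p : pred Z) (f : Y -> X -> Z) (s : seq Y) L :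
  all (fun y => all (fun a => p (f y a)) L) s -> all p [seq f y a | y <- s, a <- L].
Proof. by elim: s => //= y s IH /andP[hy /IH hs]; rewrite all_cat all_map hy. Qed.

Lemma ler_sum_all P L (F G : X -> R) :
  all P L -> (forall r, P r -> F r <= G r) ->
  \sum_(r <- L) F r <= \sum_(r <- L) G r.
Proof. by move=> /all_filterP <- FG; rewrite !big_filter; exact: ler_sum. Qed.

Lemma exists_argmin P L (h : X -> R) :
  all P L -> (0 < size L)%N -> exists2 a, P a & all (fun b => h a <= h b) L.
Proof.
elim: L => [|a L IH] //= /andP[Pa PL] _.
case: L IH PL => [_ _|b L IH PL]; first by exists a; rewrite //= lexx.
have [c Pc hc] := IH PL isT.
have [hac|hca] := leP (h a) (h c).
  exists a; rewrite // lexx /=.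
  by apply: sub_all hc => d; apply: le_trans.
by exists c; rewrite // hc andbT ltW.
Qed.

Lemma exists_le_average P L (w h : X -> R) :
  all P L -> all (fun r => 0 <= w r) L -> \sum_(r <- L) w r = 1 ->
  exists2 r, P r & h r <= \sum_(r <- L) w r * h r.
Proof.
move=> PL w0 w1; have L0 : (0 < size L)%N.
  by move: w1; case: L {PL w0} => // /eqP; rewrite big_nil eq_sym oner_eq0.
have [a Pa ha] := exists_argmin h PL L0.
exists a => //; rewrite -[h a]mul1r -w1 mulr_suml.
apply: (@ler_sum_all (predI (fun r => 0 <= w r) (fun b => h a <= h b))).
  by rewrite all_predI w0 ha.
by move=> r /andP[wr har]; rewrite ler_wpM2l.
Qed.

End WeightedSums.

(* Mean absolute value from mean square: if the square sum of f over a
   finite set I is at most k |I| and k eps^2 >= 1, then its absolute sum is at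
   most eps k |I| (pointwise AM-GM 2 eps k |f| <= f^2 + eps^2 k^2). *)
Lemma sum_abs_le_of_sum_sqr (I : finType) (f : I -> R) (k eps : R) :
  0 < eps -> 0 < k -> 1 <= k * eps ^+ 2 ->
  \sum_i f i ^+ 2 <= k * #|I|%:R -> \sum_i `|f i| <= eps * k * #|I|%:R.
Proof.
move=> e0 k0 ke sq; set N : R := #|I|%:R; have N0 : 0 <= N := ler0n _ _.
have amgm i : 2 * eps * k * `|f i| <= f i ^+ 2 + eps ^+ 2 * k ^+ 2.
  rewrite -(real_normK (num_real (f i))); have := sqr_ge0 (`|f i| - eps * k); nra.
rewrite -(ler_pM2l (_ : 0 < 2 * eps * k)) ?mulr_gt0 // mulr_sumr.
apply: le_trans (ler_sum _ (fun i _ => amgm i)) _.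
rewrite big_split sumr_const /= -[_ *+ _]mulr_natr -/N.
have kN : k * N <= k * N * (k * eps ^+ 2) by rewrite ler_peMr // mulr_ge0 // ltW.
have -> : 2 * eps * k * (eps * k * N) = k * N * (k * eps ^+ 2) + eps ^+ 2 * k ^+ 2 * N.
  by ring.
by rewrite lerD2r (le_trans sq).
Qed.

Section Realizations.
Variable n : nat.
Implicit Types (T D : sdt n) (x : {ffun 'I_n -> bool}).

Fixpoint deterministic T : bool :=
  match T with
  | Leaf _ => true
  | DNode _ T0 T1 => deterministic T0 && deterministic T1
  | SNode _ _ _ => false
  end.

Fixpoint det_eval T x : bool :=
  match T with
  | Leaf b => b
  | DNode i T0 T1 => if x i then det_eval T1 x else det_eval T0 x
  | SNode _ T0 _ => det_eval T0 x
  end.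

(* The arithmetic in sdt_mean and mean_dist is elaborated with the real
   operations of the Stdlib; these equations restate it with the ring
   operations, so that ring lemmas and tactics apply. *)
Lemma sdt_mean_Leaf b x : sdt_mean (Leaf b) x = b%:R.
Proof. by []. Qed.

Lemma sdt_mean_SNode p T0 T1 x :
  sdt_mean (SNode p T0 T1) x = p * sdt_mean T0 x + (1 - p) * sdt_mean T1 x.
Proof. by []. Qed.

Lemma mean_distE T T' :
  mean_dist T T' = (2 ^+ n)^-1 * \sum_x `|sdt_mean T x - sdt_mean T' x|.
Proof. by []. Qed.

Lemma det_mean D x : deterministic D -> sdt_mean D x = (det_eval D x)%:R.
Proof.
elim: D => [b|i D0 IH0 D1 IH1|//]; first by rewrite sdt_mean_Leaf.
by move=> /andP[/IH0 h0 /IH1 h1] /=; case: (x i).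
Qed.

Lemma sdt_mean_bounds T x : sdt_valid T -> 0 <= sdt_mean T x <= 1.
Proof.
elim: T => [b|i T0 IH0 T1 IH1|p T0 IH0 T1 IH1].
- by rewrite sdt_mean_Leaf; case: b; rewrite /= ?ler01 ?lexx.
- by move=> /andP[/IH0 h0 /IH1 h1] /=; case: (x i).
- move=> /and4P[p0 p1 /IH0 /andP[a0 a1] /IH1 /andP[b0 b1]].
  by rewrite sdt_mean_SNode; apply/andP; split; nra.
Qed.

Lemma sdt_size_gt0 T : (0 < sdt_size T)%N.
Proof. by elim: T => //= [_|_] T0 IH0 T1 _; rewrite addn_gt0 IH0. Qed.

Lemma sdt_size_nonleaf T : ~~ is_leaf T -> (2 <= sdt_size T)%N.
Proof. by case: T => //= [_|_] T0 T1 _; rewrite -addn1 leq_add ?sdt_size_gt0. Qed.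

Fixpoint realizations T : seq (R * sdt n) :=
  match T with
  | Leaf b => [:: (1, Leaf b)]
  | DNode i T0 T1 =>
      [seq (a.1 * b.1, DNode i a.2 b.2) | a <- realizations T0, b <- realizations T1]
  | SNode p T0 T1 =>
      [seq (p * a.1, a.2) | a <- realizations T0]
      ++ [seq ((1 - p) * a.1, a.2) | a <- realizations T1]
  end.

Definition good_realization (s : nat) (r : R * sdt n) : bool :=
  [&& 0 <= r.1, deterministic r.2 & (sdt_size r.2 <= s)%N].

Lemma realizations_good T :
  sdt_valid T -> all (good_realization (sdt_size T)) (realizations T).
Proof.
elim: T => [b|i T0 IH0 T1 IH1|p T0 IH0 T1 IH1] /=.
- by rewrite /good_realization /= ler01.
- move=> /andP[/IH0 h0 /IH1 h1]; apply: all_allpairs.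
  apply: sub_all h0 => a /and3P[a1 a2 a3]; apply: sub_all h1 => b /and3P[b1 b2 b3].
  by rewrite /good_realization /= mulr_ge0 // a2 b2 leq_add.
- move=> /and4P[p0 p1 /IH0 h0 /IH1 h1]; rewrite all_cat !all_map.
  apply/andP; split; [apply: sub_all h0 | apply: sub_all h1] => a /and3P[a1 a2 a3].
    by rewrite /good_realization /= mulr_ge0 // a2 (leq_trans a3) ?leq_addr.
  by rewrite /good_realization /= mulr_ge0 ?subr_ge0 // a2 (leq_trans a3) ?leq_addl.
Qed.

Lemma realizations_weights T : \sum_(r <- realizations T) r.1 = 1.
Proof.
elim: T => [b|i T0 IH0 T1 IH1|p T0 IH0 T1 IH1] /=.
- by rewrite big_seq1.
- rewrite big_allpairs_dep /= -IH0; apply: eq_bigr => a _.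
  by rewrite -mulr_sumr IH1 mulr1.
- by rewrite big_cat !big_map /= -!mulr_sumr IH0 IH1 !mulr1 addrC subrK.
Qed.

Lemma realizations_mean T x :
  \sum_(r <- realizations T) r.1 * sdt_mean r.2 x = sdt_mean T x.
Proof.
elim: T => [b|i T0 IH0 T1 IH1|p T0 IH0 T1 IH1].
- by rewrite big_seq1 mul1r.
- rewrite /= big_allpairs_dep /=; case: (x i).
  + rewrite -[RHS]mul1r -(realizations_weights T0) mulr_suml.
    apply: eq_bigr => a _; rewrite -IH1 mulr_sumr.
    by apply: eq_bigr => b _; rewrite mulrA.
  + rewrite -IH0; apply: eq_bigr => a _.
    rewrite -[RHS]mulr1 -(realizations_weights T1) !mulr_sumr.
    by apply: eq_bigr => b _; rewrite mulrAC -mulrA.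
- rewrite sdt_mean_SNode big_cat !big_map -IH0 -IH1 !mulr_sumr.
  by congr (_ + _); apply: eq_bigr => a _; rewrite mulrA.
Qed.

(* Deviations of the realizations from mu_T are centered ... *)
Lemma realizations_centered T x :
  \sum_(r <- realizations T) r.1 * (sdt_mean r.2 x - sdt_mean T x) = 0.
Proof.
under eq_bigr do rewrite mulrBr.
by rewrite sumrB -mulr_suml realizations_weights mul1r realizations_mean subrr.
Qed.

(* ... and have second moment at most 1, so that shifting them by any S
   raises the weighted mean square by at most 1. *)
Lemma realizations_spread T x (S : R) : sdt_valid T ->
  \sum_(r <- realizations T) r.1 * (sdt_mean r.2 x - sdt_mean T x + S) ^+ 2
  <= S ^+ 2 + 1.
Proof.
move=> vT; have /andP[m0 m1] := sdt_mean_bounds x vT; set m := sdt_mean T x in m0 m1 *.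
have -> : \sum_(r <- realizations T) r.1 * (sdt_mean r.2 x - m + S) ^+ 2 =
  \sum_(r <- realizations T) r.1 * (sdt_mean r.2 x - m) ^+ 2
  + 2 * S * \sum_(r <- realizations T) r.1 * (sdt_mean r.2 x - m)
  + S ^+ 2 * \sum_(r <- realizations T) r.1.
  by rewrite !mulr_sumr -!big_split /=; apply: eq_bigr => r _; ring.
rewrite realizations_centered realizations_weights mulr0 addr0 mulr1 addrC lerD2l.
rewrite -(realizations_weights T); apply: (ler_sum_all (realizations_good vT)).
move=> r /and3P[w0 dr _]; rewrite -[X in _ <= X]mulr1 ler_wpM2l //.
by rewrite det_mean //; case: (det_eval r.2 x) => /=; nra.
Qed.

(* Derandomized sampling: k realizations whose summed deviation from mu_T
   has square sum over {0,1}^n at most k 2^n (as if drawn independently). *)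
Lemma greedy_realizations T : sdt_valid T -> forall k : nat,
  exists Ds : seq (sdt n), [/\ size Ds = k,
    all (fun D => deterministic D && (sdt_size D <= sdt_size T)%N) Ds &
    \sum_x (\sum_(D <- Ds) (sdt_mean D x - sdt_mean T x)) ^+ 2
      <= k%:R * #|{ffun 'I_n -> bool}|%:R].
Proof.
move=> vT; elim=> [|k [Ds [sz gDs sq]]].
  by exists [::]; split=> //; rewrite mul0r; apply: sumr_le0 => x _; rewrite big_nil expr0n.
pose S x := \sum_(D <- Ds) (sdt_mean D x - sdt_mean T x).
pose cost (r : R * sdt n) := \sum_x (sdt_mean r.2 x - sdt_mean T x + S x) ^+ 2.
have w0 : all (fun r : R * sdt n => 0 <= r.1) (realizations T).
  by apply: sub_all (realizations_good vT) => r /and3P[].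
have [r /and3P[_ dr sr] hr] :=
  exists_le_average cost (realizations_good vT) w0 (realizations_weights T).
exists (r.2 :: Ds); split; rewrite /= ?sz ?dr ?sr //.
have avg_cost : \sum_(r <- realizations T) r.1 * cost r
    <= \sum_x (S x ^+ 2 + 1).
  rewrite /cost; under eq_bigr do rewrite mulr_sumr.
  by rewrite exchange_big; apply: ler_sum => x _; exact: realizations_spread.
under eq_bigr do rewrite big_cons.
apply: le_trans hr (le_trans avg_cost _).
by rewrite big_split sumr_const /= -natr1 mulrDl mul1r lerD2r.
Qed.

Fixpoint graft D (f : bool -> sdt n) : sdt n :=
  match D with
  | Leaf b => f b
  | DNode i D0 D1 => DNode i (graft D0 f) (graft D1 f)
  | SNode _ _ _ => D
  end.

Lemma graft_valid D f : deterministic D ->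
  (forall b, sdt_valid (f b) && stochastic_leaf (f b)) ->
  sdt_valid (graft D f) && stochastic_leaf (graft D f).
Proof.
elim: D => [b|i D0 IH0 D1 IH1|//] //= /andP[dD0 dD1] hf.
by case/andP: (IH0 dD0 hf) => -> ->; case/andP: (IH1 dD1 hf) => -> ->.
Qed.

Lemma graft_mean D f x : deterministic D ->
  sdt_mean (graft D f) x = sdt_mean (f (det_eval D x)) x.
Proof.
elim: D => [b|i D0 IH0 D1 IH1|//] //= /andP[/IH0 h0 /IH1 h1].
by case: (x i).
Qed.

Lemma graft_size D f (M : nat) : deterministic D ->
  (forall b, sdt_size (f b) <= M)%N -> (sdt_size (graft D f) <= sdt_size D * M)%N.
Proof.
elim: D => [b|i D0 IH0 D1 IH1|//] /=; first by rewrite mul1n.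
by move=> /andP[dD0 dD1] hf; rewrite mulnDl leq_add ?IH0 ?IH1.
Qed.

Fixpoint count_tree (k : nat) (Ds : seq (sdt n)) (a : nat) : sdt n :=
  match Ds with
  | [::] => SNode (a%:R / k%:R)%R (Leaf true) (Leaf false)
  | D :: Ds' => graft D (fun b => count_tree k Ds' (a + b))
  end.

Lemma count_tree_ok (k : nat) Ds a :
  (0 < k)%N -> (a + size Ds <= k)%N -> all deterministic Ds ->
  sdt_valid (count_tree k Ds a) && stochastic_leaf (count_tree k Ds a).
Proof.
move=> k0; elim: Ds a => [|D Ds IH] a /=.
  rewrite addn0 !andbT => ak _; have kp : (0 : R) < k%:R by rewrite ltr0n.
  by rewrite divr_ge0 ?ler0n //= ler_pdivrMr // mul1r ler_nat.
move=> hs /andP[dD dDs]; apply: graft_valid => // b; apply: IH => //.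
by apply: leq_trans hs; rewrite -addnA leq_add2l addnC -addn1 leq_add2l leq_b1.
Qed.

Lemma count_tree_mean (k : nat) Ds a x : all deterministic Ds ->
  sdt_mean (count_tree k Ds a) x
  = (a%:R + \sum_(D <- Ds) (det_eval D x)%:R) / k%:R.
Proof.
elim: Ds a => [|D Ds IH] a; last first.
  move=> /andP[dD dDs] /=.
  by rewrite graft_mean // IH // big_cons natrD addrA.
by move=> _; rewrite sdt_mean_SNode !sdt_mean_Leaf /= mulr1n mulr0n big_nil !addr0 mulr1 mulr0 addr0.
Qed.

Lemma count_tree_size (k : nat) Ds a (s : nat) :
  all (fun D => deterministic D && (sdt_size D <= s)%N) Ds ->
  (sdt_size (count_tree k Ds a) <= 2 * s ^ size Ds)%N.
Proof.
elim: Ds a => [|D Ds IH] a //= /andP[/andP[dD sD] hDs].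
rewrite expnS mulnCA; apply: leq_trans (graft_size dD (fun b => IH (a + b) hDs)) _.
by rewrite leq_mul2r sD orbT.
Qed.

Lemma sum_deviation Ds x (m : R) : all deterministic Ds ->
  \sum_(D <- Ds) (sdt_mean D x - m) = \sum_(D <- Ds) (det_eval D x)%:R - (size Ds)%:R * m.
Proof.
elim: Ds => [|D Ds IH] /=; first by rewrite !big_nil mul0r subr0.
by move=> /andP[dD /IH {}IH]; rewrite !big_cons IH det_mean // -addn1 natrD; ring.
Qed.

Lemma count_tree_error T Ds x : (0 < size Ds)%N -> all deterministic Ds ->
  `|sdt_mean T x - sdt_mean (count_tree (size Ds) Ds 0) x|
  = `|\sum_(D <- Ds) (sdt_mean D x - sdt_mean T x)| / (size Ds)%:R.
Proof.
move=> Ds0 dDs; rewrite count_tree_mean // add0r sum_deviation //.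
have k0 : 0 < (size Ds)%:R :> R by rewrite ltr0n.
rewrite -[X in _ = _ / X](ger0_norm (ltW k0)) -normf_div -normrN; congr `|_|.
by field; rewrite gt_eqF.
Qed.

Lemma count_tree_mean_dist T Ds (eps : R) :
  0 < eps -> (0 < size Ds)%N -> all deterministic Ds ->
  1 <= (size Ds)%:R * eps ^+ 2 ->
  \sum_x (\sum_(D <- Ds) (sdt_mean D x - sdt_mean T x)) ^+ 2
    <= (size Ds)%:R * #|{ffun 'I_n -> bool}|%:R ->
  mean_dist T (count_tree (size Ds) Ds 0) <= eps.
Proof.
move=> e0 Ds0 dDs ke sq; have k0 : 0 < (size Ds)%:R :> R by rewrite ltr0n.
have := sum_abs_le_of_sum_sqr e0 k0 ke sq.
rewrite card_ffun card_bool card_ord natrX => abs_sum.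
rewrite mean_distE; under eq_bigr do rewrite (count_tree_error _ _ Ds0 dDs).
rewrite -mulr_suml ler_pdivrMl ?exprn_gt0 // ler_pdivrMr //.
by rewrite -mulrA mulrC.
Qed.

End Realizations.

Lemma natX_le_powR (s m : nat) (e : R) :
  (0 < s)%N -> m%:R <= e -> (s ^ m)%:R <= s%:R `^ e.
Proof. by move=> s0 me; rewrite natrX -powR_mulrn ?ler0n // ler_powR // ler1n. Qed.

Theorem lemma4 :
  exists c : R, 0 < c /\
  forall (n : nat) (T : sdt n), sdt_valid T ->
  forall eps : R, 0 < eps -> eps < 2^-1 ->
  exists Tbar : sdt n,
    [/\ sdt_valid Tbar, stochastic_leaf Tbar,
        (sdt_size Tbar)%:R <= (sdt_size T)%:R `^ (c / eps ^+ 2)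
      & mean_dist T Tbar <= eps].
Proof.
exists 2; split=> [|n T vT eps e0 e1]; first by rewrite ltr0n.
have [leafT|nleafT] := boolP (is_leaf T).
  case: T vT leafT => // b _ _; exists (Leaf b); split=> //; first by rewrite powR1.
  rewrite mean_distE big1 => [|x _]; last by rewrite subrr normr0.
  by rewrite mulr0 ltW.
pose t := (eps ^+ 2)^-1; pose k := (Num.truncn t).+1.
have e2 : 0 < eps ^+ 2 by rewrite exprn_gt0.
have te : t * eps ^+ 2 = 1 by rewrite mulVf // gt_eqF.
have e4 : eps ^+ 2 < 4^-1 by rewrite expr2; nra.
have t4 : 4 < t by nra.
have kt : t < k%:R := truncnS_gt t.
have kt1 : k%:R <= t + 1 by rewrite -natr1 lerD2r truncn_le; lra.
have [Ds [sz gDs sq]] := greedy_realizations vT k.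
have dDs : all (@deterministic n) Ds by apply: sub_all gDs => D /andP[].
have /andP[vB slB] := count_tree_ok (a := 0) (ltn0Sn _) (eq_leq sz) dDs.
exists (count_tree k Ds 0); split=> //.
  (* Size: 2 s^k <= s^(k+1) <= s^(2/eps^2), as s >= 2 and k + 1 <= 2/eps^2. *)
  apply: le_trans (natX_le_powR (sdt_size_gt0 T) (_ : k.+1%:R <= _)); last first.
    by rewrite -natr1 -/t; lra.
  rewrite ler_nat (leq_trans (count_tree_size _ _ gDs)) // sz expnS leq_mul2r.
  by rewrite sdt_size_nonleaf ?orbT.
rewrite -sz; apply: count_tree_mean_dist; rewrite ?sz //.
by rewrite -[X in X <= _]te ler_pM2r // ltW.
Qed.
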